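(* Let $|\psi\rangle$ be a pure three-qubit state with two-qubit reduced states $\rho_{AB},\rho_{AC},\rho_{BC}$. Then $S_{AB}>S_{AC}>S_{BC}$ if and only if $\mathcal C_{AB}>\mathcal C_{AC}>\mathcal C_{BC}$.
   Context: For a two-qubit state $\rho$ let $t_{kl}=\mathrm{Tr}[\rho\,\sigma_k\otimes\sigma_l]$ ($\sigma_k$ Pauli matrices) and $S(\rho)=\sum_{k,l=1}^3 t_{kl}^2$; $S_{ij}=S(\rho_{ij})$. $\mathcal C_{ij}$ denotes the (Wootters) concurrence of $\rho_{ij}$: $\mathcal C(\rho)=\max\{0,\lambda_1-\lambda_2-\lambda_3-\lambda_4\}$, where $\lambda_1\ge\dots\ge\lambda_4$ are the square roots of the eigenvalues of $\rho(\sigma_2\otimes\sigma_2)\rho^*(\sigma_2\otimes\sigma_2)$. *)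

From HB Require Import structures.
From mathcomp Require Import all_boot all_order all_algebra.
From mathcomp Require Import reals.
From mathcomp Require Import complex mxtens.
Set Implicit Arguments. Unset Strict Implicit. Unset Printing Implicit Defensive.
Import Order.TTheory GRing.Theory Num.Theory.
Local Open Scope ring_scope.
Local Open Scope complex_scope.

Section Qubits.
Variable R : realType.
Local Notation C := R[i].

Definition pauli_x : 'M[C]_2 := \matrix_(i < 2, j < 2) (if i == j then 0 else 1).
Definition pauli_y : 'M[C]_2 :=
  \matrix_(i < 2, j < 2)
    (if i == j then 0 else if (i == 0 :> nat) then - 'i else 'i).
Definition pauli_z : 'M[C]_2 :=
  \matrix_(i < 2, j < 2)
    (if i == j then (if (i == 0 :> nat) then 1 else -1) else 0).

(* sigma k for k = 0,1,2 stands for sigma_{k+1}. *)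
Definition pauli (k : 'I_3) : 'M[C]_2 :=
  if (k == 0 :> nat) then pauli_x else if (k == 1 :> nat) then pauli_y
  else pauli_z.

(* Two-qubit operators act on C^2 (x) C^2, the basis |a b> having index
   2a + b (the convention of tensmx / mxtens_index). *)

(* Given an amplitude function f x y z, the reduced state on (x,y) obtained
   by tracing out z from |f><f|:  rho[(x,y),(x',y')] = sum_z f x y z conj(f x' y' z). *)
Definition reduce (f : 'I_2 -> 'I_2 -> 'I_2 -> C) : 'M[C]_(2 * 2) :=
  \matrix_(i, j) \sum_(z < 2)
     f (mxtens_unindex i).1 (mxtens_unindex i).2 z
     * (f (mxtens_unindex j).1 (mxtens_unindex j).2 z)^*.

(* psi a b c = <abc|psi>, qubits A, B, C. *)
Definition rhoAB (psi : 'I_2 -> 'I_2 -> 'I_2 -> C) := reduce psi.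
Definition rhoAC (psi : 'I_2 -> 'I_2 -> 'I_2 -> C) :=
  reduce (fun a c b => psi a b c).
Definition rhoBC (psi : 'I_2 -> 'I_2 -> 'I_2 -> C) :=
  reduce (fun b c a => psi a b c).

(* t_{kl} = Tr[rho sigma_k (x) sigma_l] (a real number for Hermitian rho;
   we take its real part to land in R). *)
Definition tcorr (rho : 'M[C]_(2 * 2)) (k l : 'I_3) : R :=
  @complex.Re R (\tr (rho *m (pauli k *t pauli l))).

Definition Sval (rho : 'M[C]_(2 * 2)) : R :=
  \sum_(k < 3) \sum_(l < 3) tcorr rho k l ^+ 2.

Definition wootters_mx (rho : 'M[C]_(2 * 2)) : 'M[C]_(2 * 2) :=
  rho *m (pauli_y *t pauli_y) *m map_mx Num.conj rho *m (pauli_y *t pauli_y).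

(* The eigenvalues (with algebraic multiplicity) of a square matrix:
   the roots of its characteristic polynomial, which splits over C. *)
Definition eigenvalues (n : nat) (M : 'M[C]_n) : seq C :=
  sval (closed_field_poly_normal (char_poly M)).

(* lambda_1 >= ... >= lambda_4: square roots of the eigenvalues of the
   Wootters matrix (which are nonnegative reals), in decreasing order. *)
Definition wootters_lambdas (rho : 'M[C]_(2 * 2)) : seq R :=
  sort (fun x y : R => y <= x)
       [seq Num.sqrt (@complex.Re R z) | z <- eigenvalues (wootters_mx rho)].

Definition concurrence (rho : 'M[C]_(2 * 2)) : R :=
  let l := wootters_lambdas rho in
  Num.max 0 (l`_0 - l`_1 - l`_2 - l`_3).

End Qubits.

From Pilot Require Import Defs.
From HB Require Import structures.
From mathcomp Require Import all_boot all_order all_algebra.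
From mathcomp Require Import reals.
From mathcomp Require Import complex mxtens.
From mathcomp Require Import ring lra.
Import Order.TTheory GRing.Theory Num.Theory.
Local Open Scope ring_scope.
Local Open Scope complex_scope.
Set Implicit Arguments. Unset Strict Implicit. Unset Printing Implicit Defensive.

(* Write the amplitudes of psi as the 4 x 2 matrix V whose rows are indexed by the
   qubits A, B and whose columns by C, so that rho_AB = V V^*.  The Wootters matrix
   is then V Q with Q V = conj(B) B, where B = V^T (sigma_2 (x) sigma_2) V is a complex
   symmetric 2 x 2 matrix.  Hence its eigenvalues are 0, 0, s1^2, s2^2 with
   s1^2 + s2^2 = |B|^2 (Frobenius norm) and s1 s2 = |det B|, and
   C_AB = s1 - s2 = sqrt (|B|^2 - 2 |det B|).  The polynomial det B does not depend on
   the pair of qubits (|det B| is a quarter of the three-tangle), so C_ij is an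
   increasing function of |B_ij|^2.  Expanding in Pauli coordinates,
   S_ij = 3 |B_ij|^2 + P_A + P_B + P_C - 2 <psi|psi>^2 with P_k the purity of the
   one-qubit marginal k, so S_ij is an increasing function of |B_ij|^2 as well. *)

Lemma det_mx2 (R : comNzRingType) (A : 'M[R]_2) :
  \det A = A 0 0 * A 1 1 - A 0 1 * A 1 0.
Proof.
rewrite (expand_det_row _ 0) !big_ord_recl big_ord0 addr0 /cofactor !det_mx11.
rewrite !mxE /= expr0 expr1 mul1r mulN1r mulrN.
by congr (A _ _ * A _ _ - A _ _ * A _ _); apply: val_inj.
Qed.

Lemma char_poly_mx2 (R : comNzRingType) (A : 'M[R]_2) :
  char_poly A = 'X^2 - (\tr A)%:P * 'X + (\det A)%:P.
Proof.
rewrite /char_poly /char_poly_mx !det_mx2 /mxtrace !big_ord_recl big_ord0 !mxE /=.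
have -> : lift ord0 ord0 = 1 :> 'I_2 by apply: val_inj.
rewrite ?mulr1n ?mulr0n ?sub0r ?rmorphD ?rmorphB ?rmorphN ?rmorphM /=; ring.
Qed.

(* Sylvester: compare the determinants of [[X, A], [B, 1]] and [[1, A], [B, X]]. *)
Lemma char_poly_mulmxC (R : comNzRingType) m n (A : 'M[R]_(m, n)) (B : 'M[R]_(n, m)) :
  'X^n * char_poly (A *m B) = 'X^m * char_poly (B *m A).
Proof.
set A' := map_mx polyC A; set B' := map_mx polyC B.
have cpAB : char_poly (A *m B) = \det ('X%:M - A' *m B').
  by rewrite /char_poly /char_poly_mx map_mxM.
have cpBA : char_poly (B *m A) = \det ('X%:M - B' *m A').
  by rewrite /char_poly /char_poly_mx map_mxM.
set N := block_mx ('X%:M : 'M_m) A' B' (1%:M : 'M_n).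
set N' := block_mx (1%:M : 'M_m) A' B' ('X%:M : 'M_n).
have detN : \det N = char_poly (A *m B).
  have -> : N = block_mx 1%:M A' 0 1%:M *m block_mx ('X%:M - A' *m B') 0 B' 1%:M.
    by rewrite mulmx_block ?mul1mx ?mul0mx ?mulmx0 ?mulmx1 ?add0r ?addr0 subrK.
  by rewrite det_mulmx det_ublock det_lblock !det1 !mulr1 mul1r cpAB.
have detN' : \det N' = char_poly (B *m A).
  have -> : N' = block_mx 1%:M 0 B' 1%:M *m block_mx 1%:M A' 0 ('X%:M - B' *m A').
    by rewrite mulmx_block ?mul1mx ?mul0mx ?mulmx0 ?mulmx1 ?add0r ?addr0 addrC subrK.
  by rewrite det_mulmx det_ublock det_lblock !det1 !mul1r cpBA.
have : block_mx 1%:M 0 0 ('X%:M) *m N = N' *m block_mx ('X%:M) 0 0 1%:M.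
  by rewrite !mulmx_block ?mul1mx ?mul0mx ?mulmx0 ?mulmx1 ?add0r ?addr0 scalar_mxC.
move/(congr1 determinant); rewrite !det_mulmx det_ublock det_lblock !det1 !det_scalar.
by rewrite mul1r mulr1 detN detN' => ->; exact: mulrC.
Qed.

Lemma big_ord2 (V : nmodType) (F : 'I_2 -> V) : \sum_(i < 2) F i = F 0 + F 1.
Proof. by rewrite big_ord_recr big_ord1; congr (F _ + F _); apply: val_inj. Qed.

Lemma big_ord3 (V : nmodType) (F : 'I_3 -> V) :
  \sum_(i < 3) F i = F 0 + F 1 + F 2.
Proof.
by rewrite big_ord_recr big_ord2; congr (F _ + F _ + F _); apply: val_inj.
Qed.

Lemma ltr_sqrt_nneg (R : rcfType) (a b : R) :
  0 <= a -> (Num.sqrt a < Num.sqrt b) = (a < b).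
Proof. by move=> a_ge0; rewrite !ltNge ler_sqrt. Qed.

Lemma ltr_sqrt_shift (R : rcfType) (c s1 s2 t1 t2 d : R) : 0 < c ->
  s1 - c * t1 = s2 - c * t2 -> 2 * d <= t1 ->
  (s1 < s2) = (Num.sqrt (t1 - 2 * d) < Num.sqrt (t2 - 2 * d)).
Proof.
move=> c_gt0 e le_t1; rewrite ltr_sqrt_nneg ?subr_ge0 // ltrBlDr subrK.
have -> : s2 = s1 + c * (t2 - t1) by rewrite mulrBr; lra.
by rewrite ltrDl pmulr_rgt0 // subr_gt0.
Qed.

Section ComplexMatrix.
Variable R : rcfType.
Local Notation C := R[i].
Local Notation Re := (@complex.Re R).
Local Notation Im := (@complex.Im R).
Import Normc.

Lemma ReD (x y : C) : Re (x + y) = Re x + Re y. Proof. by case: x y => [a b] [c d]. Qed.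

Lemma ImD (x y : C) : Im (x + y) = Im x + Im y. Proof. by case: x y => [a b] [c d]. Qed.

Lemma ReN (x : C) : Re (- x) = - Re x. Proof. by case: x. Qed.

Lemma ImN (x : C) : Im (- x) = - Im x. Proof. by case: x. Qed.

Lemma ReM (x y : C) : Re (x * y) = Re x * Re y - Im x * Im y.
Proof. by case: x y => [a b] [c d]. Qed.

Lemma ImM (x y : C) : Im (x * y) = Re x * Im y + Im x * Re y.
Proof. by case: x y => [a b] [c d] /=; rewrite addrC. Qed.

Lemma ReJ (x : C) : Re x^* = Re x. Proof. by case: x. Qed.

Lemma ImJ (x : C) : Im x^* = - Im x. Proof. by case: x. Qed.

(* In [Defs.pauli_y] the entry [- 'i] is parsed in ring_scope, i.e. as Num's imaginary
   unit, while the entry ['i] is [Complex 0 1]; the two are convertible. *)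
Lemma imaginaryE : 'i%R = 'i%C :> C. Proof. by []. Qed.

Lemma Im_Re (w : C) : Im w = Re (w * - 'i%C).
Proof. by rewrite ReM /= oppr0 mulr0 sub0r mulrN1 opprK. Qed.

Lemma normc_ge0 (x : C) : 0 <= normc x.
Proof. by case: x => a b; exact: sqrtr_ge0. Qed.

Lemma normc_sqr (x : C) : normc x ^+ 2 = Re x ^+ 2 + Im x ^+ 2.
Proof. by case: x => a b; rewrite /= sqr_sqrtr // addr_ge0 ?sqr_ge0. Qed.

Lemma conjc_mul_normc (x : C) : x^* * x = (normc x ^+ 2)%:C.
Proof.
rewrite normc_sqr; case: x => a b; apply/eqP.
by rewrite eq_complex /= !expr2; apply/andP; split; apply/eqP; ring.
Qed.

Definition frobenius_sqr n (B : 'M[C]_n) : R :=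
  \sum_(i < n) \sum_(j < n) normc (B i j) ^+ 2.

Lemma trace_conj_mul_sym n (B : 'M[C]_n) :
  B^T = B -> \tr (map_mx conjc B *m B) = (frobenius_sqr B)%:C.
Proof.
move=> symB; rewrite /mxtrace /frobenius_sqr rmorph_sum; apply: eq_bigr => i _.
rewrite mxE rmorph_sum; apply: eq_bigr => j _.
by rewrite mxE -{2}symB mxE conjc_mul_normc.
Qed.

Lemma det_conj_mul n (B : 'M[C]_n) :
  \det (map_mx conjc B *m B) = (normc (\det B) ^+ 2)%:C.
Proof. by rewrite det_mulmx det_map_mx conjc_mul_normc. Qed.

Lemma normc_det_mx2_le (B : 'M[C]_2) : 2 * normc (\det B) <= frobenius_sqr B.
Proof.
have normc_det : normc (\det B) <=
    normc (B 0 0) * normc (B 1 1) + normc (B 0 1) * normc (B 1 0).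
  by rewrite det_mx2; apply: le_trans (le_normcD _ _) _; rewrite normcN !normcM.
have -> : frobenius_sqr B = normc (B 0 0) ^+ 2 + normc (B 0 1) ^+ 2
                          + (normc (B 1 0) ^+ 2 + normc (B 1 1) ^+ 2).
  by rewrite /frobenius_sqr !big_ord2.
have := sqr_ge0 (normc (B 0 0) - normc (B 1 1)).
have := sqr_ge0 (normc (B 0 1) - normc (B 1 0)).
nra.
Qed.

Lemma sqr_sum_mul_solution (t d : R) : 0 <= d -> 2 * d <= t ->
  exists s1 s2 : R, [/\ 0 <= s2 <= s1, s1 ^+ 2 + s2 ^+ 2 = t, s1 * s2 = d
                       & s1 - s2 = Num.sqrt (t - 2 * d)].
Proof.
move=> d_ge0 dt; set p := Num.sqrt (t + 2 * d); set q := Num.sqrt (t - 2 * d).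
have p2 : p ^+ 2 = t + 2 * d by rewrite sqr_sqrtr //; lra.
have q2 : q ^+ 2 = t - 2 * d by rewrite sqr_sqrtr //; lra.
have q_ge0 : 0 <= q := sqrtr_ge0 _.
have qp : q <= p by rewrite ler_sqrt; lra.
by exists ((p + q) / 2), ((p - q) / 2); split; first (apply/andP; split); lra.
Qed.

Lemma char_poly_conj_mul_sym (B : 'M[C]_2) : B^T = B ->
  exists s1 s2 : R, [/\ 0 <= s2 <= s1,
    char_poly (map_mx conjc B *m B) = ('X - (s1 ^+ 2)%:C%:P) * ('X - (s2 ^+ 2)%:C%:P)
  & s1 - s2 = Num.sqrt (frobenius_sqr B - 2 * normc (\det B))].
Proof.
move=> symB.
have [s1 [s2 [s21 sum_sqr mul_s s_sub]]] :=
  sqr_sum_mul_solution (normc_ge0 _) (normc_det_mx2_le B).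
exists s1, s2; split => //.
rewrite char_poly_mx2 trace_conj_mul_sym // det_conj_mul -sum_sqr -mul_s.
rewrite !rmorphD !rmorphM /=; ring.
Qed.

End ComplexMatrix.

Section Qubits.
Variable R : realType.
Local Notation C := R[i].
Local Notation ix a b := (@mxtens_index 2 2 (a, b)).
Import Normc.

Lemma perm_eq_eigenvalues n (M : 'M[C]_n) (s : seq C) :
  char_poly M = \prod_(z <- s) ('X - z%:P) -> perm_eq (eigenvalues M) s.
Proof.
rewrite /eigenvalues; case: (closed_field_poly_normal _) => r /= cpM cpMs.
by apply: prod_XsubC_eq; rewrite -cpMs {1}cpM (monicP (char_poly_monic _)) scale1r.
Qed.

Lemma concurrence_of_spectrum (rho : 'M[C]_(2 * 2)) (s1 s2 : R) : 0 <= s2 <= s1 ->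
  char_poly (wootters_mx rho) = 'X^2 * (('X - (s1 ^+ 2)%:C%:P) * ('X - (s2 ^+ 2)%:C%:P)) ->
  concurrence rho = s1 - s2.
Proof.
move=> /andP[s2_ge0 s21] cpW.
have eig : perm_eq (eigenvalues (wootters_mx rho)) [:: 0; 0; (s1 ^+ 2)%:C; (s2 ^+ 2)%:C].
  by apply: perm_eq_eigenvalues; rewrite cpW !big_cons big_nil polyC0 subr0 mulr1; ring.
have lambdas : wootters_lambdas rho = [:: s1; s2; 0; 0].
  have /(perm_map (fun z => Num.sqrt (complex.Re z))) := eig.
  rewrite /= sqrtr0 !sqrtr_sqr !ger0_norm ?(le_trans s2_ge0) // => sqrt_eig.
  rewrite /wootters_lambdas -[RHS](sorted_sort ge_trans); last by rewrite /= s21 s2_ge0 lexx.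
  apply/(perm_sortP ge_total ge_trans ge_anti); apply: perm_trans sqrt_eig _.
  by rewrite -[[:: 0; 0; s1; s2]]/([:: 0; 0] ++ [:: s1; s2]) perm_catC.
by rewrite /concurrence lambdas /= !subr0 max_r // subr_ge0.
Qed.

Lemma sum_mxtens_index (F : 'I_(2 * 2) -> C) :
  \sum_(i < 2 * 2) F i = \sum_(a < 2) \sum_(b < 2) F (ix a b).
Proof.
rewrite pair_big /=; apply: reindex; exists (@mxtens_unindex 2 2) => [[a b] _ | i _].
  exact: mxtens_indexK.
by rewrite -surjective_pairing mxtens_unindexK.
Qed.

Definition amp_mx (f : 'I_2 -> 'I_2 -> 'I_2 -> C) : 'M[C]_(2 * 2, 2) :=
  \matrix_(i, z) f (mxtens_unindex i).1 (mxtens_unindex i).2 z.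

Definition spin_flip : 'M[C]_(2 * 2) := pauli_y R *t pauli_y R.

Definition flip_overlap f : 'M[C]_2 := (amp_mx f)^T *m spin_flip *m amp_mx f.

Lemma reduce_amp_mx f : reduce f = amp_mx f *m (map_mx conjc (amp_mx f))^T.
Proof. by apply/matrixP => i j; rewrite !mxE; apply: eq_bigr => z _; rewrite !mxE. Qed.

Lemma conj_reduce f : map_mx Num.conj (reduce f) = map_mx conjc (amp_mx f) *m (amp_mx f)^T.
Proof.
rewrite -[map_mx _ _]/(map_mx conjc (reduce f)); apply/matrixP => i j.
by rewrite !mxE rmorph_sum; apply: eq_bigr => z _; rewrite !mxE rmorphM /= conjcK.
Qed.

Lemma ord2P (a : 'I_2) : a = 0 \/ a = 1.
Proof. by case: a => [[|[|//]]] ?; [left | right]; apply: val_inj. Qed.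

Lemma pauli_y_skew a c : pauli_y R c a = - pauli_y R a c.
Proof.
by rewrite !mxE; case: (ord2P a) => ->; case: (ord2P c) => ->; rewrite /= ?oppr0 ?opprK.
Qed.

Lemma conj_pauli_y a c : (pauli_y R a c)^* = - pauli_y R a c.
Proof.
rewrite !mxE; case: (ord2P a) => ->; case: (ord2P c) => ->; rewrite /= ?oppr0 //.
all: by apply/eqP; rewrite eq_complex /= ?oppr0 ?opprK ?eqxx.
Qed.

Lemma trmx_spin_flip : spin_flip^T = spin_flip.
Proof.
apply/matrixP => i j; case: (mxtens_indexP i) => a b; case: (mxtens_indexP j) => c d.
by rewrite mxE !tensmxE (pauli_y_skew a c) (pauli_y_skew b d) mulrNN.
Qed.

Lemma conj_spin_flip : map_mx conjc spin_flip = spin_flip.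
Proof.
apply/matrixP => i j; case: (mxtens_indexP i) => a b; case: (mxtens_indexP j) => c d.
by rewrite mxE !tensmxE rmorphM /= !conj_pauli_y mulrNN.
Qed.

Lemma trmx_flip_overlap f : (flip_overlap f)^T = flip_overlap f.
Proof. by rewrite /flip_overlap !trmx_mul trmxK trmx_spin_flip mulmxA. Qed.

Lemma char_poly_wootters_reduce f : char_poly (wootters_mx (reduce f)) =
  'X^2 * char_poly (map_mx conjc (flip_overlap f) *m flip_overlap f).
Proof.
set V := amp_mx f.
set Q := (map_mx conjc V)^T *m spin_flip *m map_mx conjc V *m V^T *m spin_flip.
have -> : wootters_mx (reduce f) = V *m Q.
  by rewrite /wootters_mx conj_reduce reduce_amp_mx /Q /spin_flip !mulmxA.
have -> : map_mx conjc (flip_overlap f) *m flip_overlap f = Q *m V.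
  by rewrite /flip_overlap !map_mxM -map_trmx conj_spin_flip /Q !mulmxA.
apply: (@mulfI _ 'X^2); first by rewrite monic_neq0 // monicXn.
by rewrite char_poly_mulmxC mulrA -exprD.
Qed.

Lemma concurrence_reduce f : concurrence (reduce f) =
  Num.sqrt (frobenius_sqr (flip_overlap f) - 2 * normc (\det (flip_overlap f))).
Proof.
have [s1 [s2 [s21 cpB <-]]] := char_poly_conj_mul_sym (trmx_flip_overlap f).
by apply: concurrence_of_spectrum s21 _; rewrite char_poly_wootters_reduce cpB.
Qed.

Lemma flip_overlapE f z w : flip_overlap f z w =
  f 0 1 z * f 1 0 w + f 1 0 z * f 0 1 w - f 0 0 z * f 1 1 w - f 1 1 z * f 0 0 w.
Proof.
rewrite /flip_overlap /spin_flip !mxE !sum_mxtens_index !big_ord2.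
rewrite !mxE !sum_mxtens_index !big_ord2 !tensmxE !mxE !mxtens_indexK /=.
rewrite !(mul0r, mulr0, add0r, addr0, mulrN, mulNr, opprK) -expr2 sqr_i; ring.
Qed.

Lemma det_flip_overlap_AC psi :
  \det (flip_overlap (fun a c b => psi a b c)) = \det (flip_overlap psi).
Proof. by rewrite !det_mx2 !flip_overlapE; ring. Qed.

Lemma det_flip_overlap_BC psi :
  \det (flip_overlap (fun b c a => psi a b c)) = \det (flip_overlap psi).
Proof. by rewrite !det_mx2 !flip_overlapE; ring. Qed.

Local Notation Re := (@complex.Re R).
Local Notation Im := (@complex.Im R).
Local Notation r rho a b c d := (rho (ix a b) (ix c d)).

Lemma tcorrE (rho : 'M[C]_(2 * 2)) k l : tcorr rho k l =
  Re (\sum_(a < 2) \sum_(b < 2) \sum_(c < 2) \sum_(d < 2)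
        r rho a b c d * (pauli R k c a * pauli R l d b)).
Proof.
rewrite /tcorr /mxtrace sum_mxtens_index; congr Re; apply: eq_bigr => a _.
apply: eq_bigr => b _; rewrite mxE sum_mxtens_index; apply: eq_bigr => c _.
by apply: eq_bigr => d _; rewrite tensmxE.
Qed.

(* The nine squares are the t_kl ^+ 2, for kl = xx, xy, xz, yx, ..., zz in this order. *)
Lemma Sval_entries (rho : 'M[C]_(2 * 2)) : Sval rho =
    Re (r rho 0 0 1 1 + r rho 0 1 1 0 + r rho 1 0 0 1 + r rho 1 1 0 0) ^+ 2
  + Im (r rho 0 1 1 0 - r rho 0 0 1 1 + r rho 1 1 0 0 - r rho 1 0 0 1) ^+ 2
  + Re (r rho 0 0 1 0 - r rho 0 1 1 1 + r rho 1 0 0 0 - r rho 1 1 0 1) ^+ 2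
  + (Im (r rho 1 0 0 1 + r rho 1 1 0 0 - r rho 0 0 1 1 - r rho 0 1 1 0) ^+ 2
  + Re (r rho 0 1 1 0 + r rho 1 0 0 1 - r rho 0 0 1 1 - r rho 1 1 0 0) ^+ 2
  + Im (r rho 0 1 1 1 + r rho 1 0 0 0 - r rho 0 0 1 0 - r rho 1 1 0 1) ^+ 2)
  + (Re (r rho 0 0 0 1 + r rho 0 1 0 0 - r rho 1 0 1 1 - r rho 1 1 1 0) ^+ 2
  + Im (r rho 0 1 0 0 + r rho 1 0 1 1 - r rho 0 0 0 1 - r rho 1 1 1 0) ^+ 2
  + Re (r rho 0 0 0 0 - r rho 0 1 0 1 - r rho 1 0 1 0 + r rho 1 1 1 1) ^+ 2).
Proof.
rewrite /Sval big_ord3 [X in X + _ + _]big_ord3 [X in _ + X + _]big_ord3.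
rewrite [X in _ + _ + X]big_ord3 !tcorrE.
congr (_ ^+ 2 + _ ^+ 2 + _ ^+ 2 + (_ ^+ 2 + _ ^+ 2 + _ ^+ 2) + (_ ^+ 2 + _ ^+ 2 + _ ^+ 2)).
all: rewrite !big_ord2 /Defs.pauli !mxE /=.
all: rewrite ?(mul0r, mulr0, mul1r, mulr1, add0r, addr0) ?Im_Re; congr Re.
all: rewrite ?imaginaryE ?(mulrN, mulNr, opprK) -?expr2 ?sqr_i; ring.
Qed.

Lemma Re_reduce f a b c d : Re (r (reduce f) a b c d) =
  \sum_(z < 2) (Re (f a b z) * Re (f c d z) + Im (f a b z) * Im (f c d z)).
Proof.
by rewrite mxE !mxtens_indexK !big_ord2 ReD !ReM !ReJ !ImJ !mulrN !opprK.
Qed.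

Lemma Im_reduce f a b c d : Im (r (reduce f) a b c d) =
  \sum_(z < 2) (Im (f a b z) * Re (f c d z) - Re (f a b z) * Im (f c d z)).
Proof.
by rewrite mxE !mxtens_indexK !big_ord2 ImD !ImM !ReJ !ImJ !mulrN ![_ + - _]addrC.
Qed.

Lemma Re_flip_overlap f z w : Re (flip_overlap f z w) =
    Re (f 0 1 z) * Re (f 1 0 w) - Im (f 0 1 z) * Im (f 1 0 w)
  + (Re (f 1 0 z) * Re (f 0 1 w) - Im (f 1 0 z) * Im (f 0 1 w))
  - (Re (f 0 0 z) * Re (f 1 1 w) - Im (f 0 0 z) * Im (f 1 1 w))
  - (Re (f 1 1 z) * Re (f 0 0 w) - Im (f 1 1 z) * Im (f 0 0 w)).
Proof. by rewrite flip_overlapE !(ReD, ReN, ReM). Qed.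

Lemma Im_flip_overlap f z w : Im (flip_overlap f z w) =
    Re (f 0 1 z) * Im (f 1 0 w) + Im (f 0 1 z) * Re (f 1 0 w)
  + (Re (f 1 0 z) * Im (f 0 1 w) + Im (f 1 0 z) * Re (f 0 1 w))
  - (Re (f 0 0 z) * Im (f 1 1 w) + Im (f 0 0 z) * Re (f 1 1 w))
  - (Re (f 1 1 z) * Im (f 0 0 w) + Im (f 1 1 z) * Re (f 0 0 w)).
Proof. by rewrite flip_overlapE !(ImD, ImN, ImM). Qed.

Lemma Sval_sub_frobenius_AC psi :
  Sval (rhoAB psi) - 3 * frobenius_sqr (flip_overlap psi) =
  Sval (rhoAC psi) - 3 * frobenius_sqr (flip_overlap (fun a c b => psi a b c)).
Proof.
rewrite /frobenius_sqr !big_ord2 !normc_sqr !Re_flip_overlap !Im_flip_overlap.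
rewrite !Sval_entries !(ReD, ImD, ReN, ImN) !(Re_reduce, Im_reduce) !big_ord2.
ring.
Qed.

Lemma Sval_sub_frobenius_BC psi :
  Sval (rhoAC psi) - 3 * frobenius_sqr (flip_overlap (fun a c b => psi a b c)) =
  Sval (rhoBC psi) - 3 * frobenius_sqr (flip_overlap (fun b c a => psi a b c)).
Proof.
rewrite /frobenius_sqr !big_ord2 !normc_sqr !Re_flip_overlap !Im_flip_overlap.
rewrite !Sval_entries !(ReD, ImD, ReN, ImN) !(Re_reduce, Im_reduce) !big_ord2.
ring.
Qed.

End Qubits.

Theorem theorem2 (R : realType) (psi : 'I_2 -> 'I_2 -> 'I_2 -> R[i]) :
  \sum_(a < 2) \sum_(b < 2) \sum_(c < 2) `|psi a b c| ^+ 2 = 1 ->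
  ((Sval (rhoAB psi) > Sval (rhoAC psi) /\ Sval (rhoAC psi) > Sval (rhoBC psi))
   <->
   (concurrence (rhoAB psi) > concurrence (rhoAC psi) /\
    concurrence (rhoAC psi) > concurrence (rhoBC psi))).
Proof.
move=> _.
have le_AC := normc_det_mx2_le (flip_overlap (fun a c b => psi a b c)).
have le_BC := normc_det_mx2_le (flip_overlap (fun b c a => psi a b c)).
rewrite (det_flip_overlap_AC psi) in le_AC; rewrite (det_flip_overlap_BC psi) in le_BC.
rewrite (ltr_sqrt_shift _ (esym (Sval_sub_frobenius_AC psi)) le_AC) //.
rewrite (ltr_sqrt_shift _ (esym (Sval_sub_frobenius_BC psi)) le_BC) //.
rewrite /rhoAB /rhoAC /rhoBC !concurrence_reduce.
by rewrite (det_flip_overlap_AC psi) (det_flip_overlap_BC psi).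
Qed.
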